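(* Let $\kappa>0$, $\beta>0$, $\lambda>0$ and $U\neq0$ be real. Suppose $(Q,P,X,Z)\in\mathbb{R}^4$ with $Q\neq0$ satisfies \begin{align*} P-\kappa Q+sP&=0,\\ Q+2\sqrt2\,\lambda X+sQ+\kappa P&=0,\\ X-2\sqrt2\,\frac{\lambda}{\beta}\,ZQ&=0,\\ X^2+Z^2&=\tfrac14, \end{align*} where $s:=\frac U2(Q^2+P^2)$. Then $s\neq-1$, $$P=\frac{\kappa}{1+s}Q,\qquad X=\frac{2\sqrt2\,\lambda Q}{\beta}Z,\qquad Z=-\frac{\beta}{8\lambda^2}\,\frac{(s+1)^2+\kappa^2}{s+1},$$ $$Q^2=\frac{2s(s+1)^2}{U\big[(s+1)^2+\kappa^2\big]},\qquad P^2=\frac{2s\kappa^2}{U\big[(s+1)^2+\kappa^2\big]},$$ and $s$ is a root of $$f(s)=\big((s+1)^2+\kappa^2\big)\Big[\frac1U\,s(s+1)^2+\frac{\beta^2}{16\lambda^2}\big((s+1)^2+\kappa^2\big)\Big]-\lambda^2(s+1)^2 .$$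
   Context: These are the steady-state mean-field equations (with $Y=0$) of the dissipative quantum Rabi model with Kerr nonlinearity, written in normalized units: $\kappa$ and $\lambda$ stand for $\kappa/\omega_c$ and $\lambda/\omega_c$, $\beta=\omega_a/\omega_c$, $U=2KN/\omega_c$, and $s=U|\alpha|^2$ with $|\alpha|^2=(Q^2+P^2)/2$. Solutions with $Q\neq0$ are the superradiant steady states. *)

From Stdlib Require Import Reals.
Open Scope R_scope.

(* s := (U/2)(Q^2+P^2) = U |alpha|^2 *)
Definition s_of (U Q P : R) : R := U / 2 * (Q ^ 2 + P ^ 2).

Definition f_poly (kappa beta lambda U s : R) : R :=
  ((s + 1) ^ 2 + kappa ^ 2) *
    (/ U * s * (s + 1) ^ 2 + beta ^ 2 / (16 * lambda ^ 2) * ((s + 1) ^ 2 + kappa ^ 2))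
  - lambda ^ 2 * (s + 1) ^ 2.

(* Equation one gives (s+1) P = kappa Q, so s <> -1 and P is proportional to Q; equation three
   gives X proportional to Z Q.  Substituting both into equation two leaves Q times a linear
   equation in Z, whence Z.  Writing 2s/U = Q^2 + P^2 with P = kappa Q/(s+1) gives Q^2 and P^2,
   and the normalization X^2 + Z^2 = 1/4, rewritten with these values, is the equation f(s) = 0. *)

From Stdlib Require Import Reals Lra.
Open Scope R_scope.

Lemma sqrt2_pow2 : sqrt 2 ^ 2 = 2.
Proof. apply pow2_sqrt; lra. Qed.

Lemma sq_shift_add_sq_neq0 (kappa s : R) : s <> -1 -> (s + 1) ^ 2 + kappa ^ 2 <> 0.
Proof.
  intros s_neq.
  assert (0 < (s + 1) ^ 2) by (rewrite <- Rsqr_pow2; apply Rsqr_pos_lt; lra).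
  pose proof (pow2_ge_0 kappa).
  lra.
Qed.

Section SteadyState.

Context {kappa beta lambda U s Q P X Z : R}.

Lemma steady_s_neq_m1 :
  kappa <> 0 -> Q <> 0 -> P - kappa * Q + s * P = 0 -> s <> -1.
Proof.
  intros kappa_neq Q_neq eqP s_m1.
  subst s.
  apply (Rmult_integral_contrapositive_currified kappa Q); lra.
Qed.

Lemma steady_P_eq :
  s <> -1 -> P - kappa * Q + s * P = 0 -> P = kappa / (1 + s) * Q.
Proof.
  intros s_neq eqP.
  replace P with ((1 + s) * P / (1 + s)) by (field; lra).
  replace ((1 + s) * P) with (kappa * Q) by lra.
  field; lra.
Qed.

Lemma steady_X_eq :
  beta <> 0 -> X - 2 * sqrt 2 * (lambda / beta) * Z * Q = 0 ->
  X = 2 * sqrt 2 * lambda * Q / beta * Z.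
Proof.
  intros beta_neq eqX.
  replace X with (2 * sqrt 2 * (lambda / beta) * Z * Q) by lra.
  field; exact beta_neq.
Qed.

(* Multiply equation two by beta (s+1) and eliminate P and X; note (2 sqrt 2)^2 = 8. *)
Lemma steady_Q_mul_balance :
  beta <> 0 ->
  P - kappa * Q + s * P = 0 ->
  Q + 2 * sqrt 2 * lambda * X + s * Q + kappa * P = 0 ->
  X - 2 * sqrt 2 * (lambda / beta) * Z * Q = 0 ->
  Q * (beta * ((s + 1) ^ 2 + kappa ^ 2) + 8 * lambda ^ 2 * (s + 1) * Z) = 0.
Proof.
  intros beta_neq eqP eqQ eqX.
  assert (betaX : beta * X = 2 * sqrt 2 * lambda * Z * Q).
  { rewrite (steady_X_eq beta_neq eqX); field; exact beta_neq. }
  replace (Q * (beta * ((s + 1) ^ 2 + kappa ^ 2) + 8 * lambda ^ 2 * (s + 1) * Z)) with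
    (beta * (s + 1) * (Q + 2 * sqrt 2 * lambda * X + s * Q + kappa * P)
     - beta * kappa * (P - kappa * Q + s * P)
     - 2 * sqrt 2 * lambda * (s + 1) * (beta * X - 2 * sqrt 2 * lambda * Z * Q)
     + 4 * lambda ^ 2 * (s + 1) * Z * Q * (2 - sqrt 2 ^ 2)) by ring.
  rewrite eqQ, eqP, betaX, sqrt2_pow2.
  ring.
Qed.

Lemma steady_Z_eq :
  beta <> 0 -> lambda <> 0 -> Q <> 0 -> s <> -1 ->
  P - kappa * Q + s * P = 0 ->
  Q + 2 * sqrt 2 * lambda * X + s * Q + kappa * P = 0 ->
  X - 2 * sqrt 2 * (lambda / beta) * Z * Q = 0 ->
  Z = - (beta / (8 * lambda ^ 2)) * (((s + 1) ^ 2 + kappa ^ 2) / (s + 1)).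
Proof.
  intros beta_neq lambda_neq Q_neq s_neq eqP eqQ eqX.
  pose proof (steady_Q_mul_balance beta_neq eqP eqQ eqX) as balance.
  apply Rmult_integral in balance as [Q0 | balance]; [contradiction |].
  replace Z with (8 * lambda ^ 2 * (s + 1) * Z / (8 * lambda ^ 2 * (s + 1)))
    by (field; split; lra).
  replace (8 * lambda ^ 2 * (s + 1) * Z) with (- (beta * ((s + 1) ^ 2 + kappa ^ 2))) by lra.
  field; split; lra.
Qed.

(* 2s/U = Q^2 + P^2 = Q^2 ((s+1)^2 + kappa^2) / (s+1)^2. *)
Lemma steady_Q2_eq :
  U <> 0 -> s = s_of U Q P -> s <> -1 -> P = kappa / (1 + s) * Q ->
  Q ^ 2 = 2 * s * (s + 1) ^ 2 / (U * ((s + 1) ^ 2 + kappa ^ 2)).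
Proof.
  intros U_neq s_def s_neq P_def.
  pose proof (sq_shift_add_sq_neq0 kappa s s_neq) as D_neq.
  assert (Q2U : 2 * s * (s + 1) ^ 2 = Q ^ 2 * (U * ((s + 1) ^ 2 + kappa ^ 2))).
  { rewrite s_def at 1; unfold s_of; rewrite P_def.
    replace (1 + s) with (s + 1) by ring.
    field; lra. }
  rewrite Q2U; field; auto.
Qed.

Lemma steady_P2_eq :
  U <> 0 -> s <> -1 -> P = kappa / (1 + s) * Q ->
  Q ^ 2 = 2 * s * (s + 1) ^ 2 / (U * ((s + 1) ^ 2 + kappa ^ 2)) ->
  P ^ 2 = 2 * s * kappa ^ 2 / (U * ((s + 1) ^ 2 + kappa ^ 2)).
Proof.
  intros U_neq s_neq P_def Q2_def.
  pose proof (sq_shift_add_sq_neq0 kappa s s_neq) as D_neq.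
  rewrite P_def, Rpow_mult_distr, Q2_def.
  replace (1 + s) with (s + 1) by ring.
  field; split; lra.
Qed.

(* Use Q^2 to eliminate 1/U, and multiply X^2 + Z^2 = 1/4 by 4 lambda^2 (s+1)^2. *)
Lemma steady_f_poly_root :
  U <> 0 -> beta <> 0 -> lambda <> 0 -> s <> -1 ->
  Q ^ 2 = 2 * s * (s + 1) ^ 2 / (U * ((s + 1) ^ 2 + kappa ^ 2)) ->
  X = 2 * sqrt 2 * lambda * Q / beta * Z ->
  Z = - (beta / (8 * lambda ^ 2)) * (((s + 1) ^ 2 + kappa ^ 2) / (s + 1)) ->
  X ^ 2 + Z ^ 2 = 1 / 4 ->
  f_poly kappa beta lambda U s = 0.
Proof.
  intros U_neq beta_neq lambda_neq s_neq Q2_def X_def Z_def norm.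
  pose proof (sq_shift_add_sq_neq0 kappa s s_neq) as D_neq.
  assert (inv_U_term : / U * s * (s + 1) ^ 2 = Q ^ 2 * ((s + 1) ^ 2 + kappa ^ 2) / 2).
  { rewrite Q2_def; field; split; assumption. }
  assert (lambda_term :
      lambda ^ 2 * (s + 1) ^ 2 = 4 * lambda ^ 2 * (s + 1) ^ 2 * (X ^ 2 + Z ^ 2))
    by (rewrite norm; field).
  assert (X2 : X ^ 2 = 8 * lambda ^ 2 * Q ^ 2 / beta ^ 2 * Z ^ 2).
  { rewrite X_def.
    replace ((2 * sqrt 2 * lambda * Q / beta * Z) ^ 2) with
      (4 * sqrt 2 ^ 2 * lambda ^ 2 * Q ^ 2 * Z ^ 2 / beta ^ 2) by (field; exact beta_neq).
    rewrite sqrt2_pow2; field; exact beta_neq. }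
  unfold f_poly.
  rewrite inv_U_term, lambda_term, X2, Z_def.
  field; split; lra.
Qed.

End SteadyState.

Theorem mainTheorem3 (kappa beta lambda U Q P X Z : R) :
  0 < kappa -> 0 < beta -> 0 < lambda -> U <> 0 -> Q <> 0 ->
  let s := s_of U Q P in
  P - kappa * Q + s * P = 0 ->
  Q + 2 * sqrt 2 * lambda * X + s * Q + kappa * P = 0 ->
  X - 2 * sqrt 2 * (lambda / beta) * Z * Q = 0 ->
  X ^ 2 + Z ^ 2 = 1 / 4 ->
  s <> -1 /\
  P = kappa / (1 + s) * Q /\
  X = 2 * sqrt 2 * lambda * Q / beta * Z /\
  Z = - (beta / (8 * lambda ^ 2)) * (((s + 1) ^ 2 + kappa ^ 2) / (s + 1)) /\
  Q ^ 2 = 2 * s * (s + 1) ^ 2 / (U * ((s + 1) ^ 2 + kappa ^ 2)) /\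
  P ^ 2 = 2 * s * kappa ^ 2 / (U * ((s + 1) ^ 2 + kappa ^ 2)) /\
  f_poly kappa beta lambda U s = 0.
Proof.
  intros kappa_pos beta_pos lambda_pos U_neq Q_neq s eqP eqQ eqX norm.
  assert (kappa_neq : kappa <> 0) by lra.
  assert (beta_neq : beta <> 0) by lra.
  assert (lambda_neq : lambda <> 0) by lra.
  pose proof (steady_s_neq_m1 kappa_neq Q_neq eqP) as s_neq.
  pose proof (steady_P_eq s_neq eqP) as P_def.
  pose proof (steady_X_eq beta_neq eqX) as X_def.
  pose proof (steady_Z_eq beta_neq lambda_neq Q_neq s_neq eqP eqQ eqX) as Z_def.
  pose proof (steady_Q2_eq U_neq (eq_refl : s = s_of U Q P) s_neq P_def) as Q2_def.
  pose proof (steady_P2_eq U_neq s_neq P_def Q2_def) as P2_def.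
  pose proof (steady_f_poly_root U_neq beta_neq lambda_neq s_neq Q2_def X_def Z_def norm) as f_root.
  repeat split; assumption.
Qed.
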